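(* There exists a two-stack automaton $\Gamma_1$ such that $\alpha_n:=G(\Gamma_1,n)\in\{0,1\}$ for all $n$, and such that the infinite binary word $\alpha_1\alpha_2\alpha_3\cdots$ contains every finite binary word as a (consecutive) subword.
   Context: Let $X=\{x_i: i\in\mathbb Z\}$, $X^{-1}=\{x_i^{-1}\}$, $Y=\{y_i\}$, $Y^{-1}=\{y_i^{-1}\}$ be formal labels, and $\varepsilon$ a further label; write $w_1\sim w_2$ if both lie in $X\cup X^{-1}$ or both lie in $Y\cup Y^{-1}$. A two-stack automaton is a finite directed graph $\Gamma$ with vertices $v_1,\dots,v_m$, each vertex $v$ labelled by $\rho(v)\in X\cup X^{-1}\cup Y\cup Y^{-1}\cup\{\varepsilon\}$, such that $\rho(v_1)=\rho(v_2)=\varepsilon$ and there is no edge $v_i\to v_j$ with $\rho(v_i)\sim\rho(v_j)$. A path $\gamma=\gamma_1\cdots\gamma_n$ is a sequence of vertices joined by edges; its length is $n$. Traversing $\gamma$, keep two words $w_X\in X^*$, $w_Y\in Y^*$, initially empty; entering a vertex labelled $x_i$ appends $x_i$ to $w_X$, labelled $x_i^{-1}$ removes $x_i$ from the end of $w_X$ (similarly for $Y$ and $w_Y$), and labelled $\varepsilon$ does nothing. The path is balanced if every step is well defined and both words are empty at the end. $G(\Gamma,n)$ denotes the number of balanced paths of length $n$ from $v_1$ to $v_2$. *)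

From HB Require Import structures.
From mathcomp Require Import all_boot all_order all_algebra.
Set Implicit Arguments. Unset Strict Implicit. Unset Printing Implicit Defensive.

Inductive label : Type :=
  | LX of int | LXinv of int | LY of int | LYinv of int | Leps.

Definition lsim (a b : label) : bool :=
  match a, b with
  | (LX _ | LXinv _), (LX _ | LXinv _) => true
  | (LY _ | LYinv _), (LY _ | LYinv _) => true
  | _, _ => false
  end.

Unset Implicit Arguments.
Record two_stack_automaton := TwoStackAutomaton {
  tsa_V : finType;
  tsa_rho : tsa_V -> label;
  tsa_edge : rel tsa_V;
  tsa_v1 : tsa_V;
  tsa_v2 : tsa_V;
  tsa_v12 : tsa_v1 != tsa_v2;
  tsa_rho1 : tsa_rho tsa_v1 = Leps;
  tsa_rho2 : tsa_rho tsa_v2 = Leps;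
  tsa_edge_ok : forall a b, tsa_edge a b -> ~~ lsim (tsa_rho a) (tsa_rho b)
}.
Set Implicit Arguments.

Definition pop (i : int) (w : seq int) : option (seq int) :=
  match w with
  | [::] => None
  | a :: w' => if last a w' == i then Some (belast a w') else None
  end.

Definition step (l : label) (s : seq int * seq int) : option (seq int * seq int) :=
  let: (wx, wy) := s in
  match l with
  | LX i => Some (rcons wx i, wy)
  | LXinv i => omap (fun wx' => (wx', wy)) (pop i wx)
  | LY i => Some (wx, rcons wy i)
  | LYinv i => omap (fun wy' => (wx, wy')) (pop i wy)
  | Leps => Some (wx, wy)
  end.

Definition run (ls : seq label) : option (seq int * seq int) :=
  foldl (fun os l => if os is Some s then step l s else None)
        (Some ([::], [::])) ls.

Section Paths.
Variable A : two_stack_automaton.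

Definition walk_v1_v2 (p : seq (tsa_V A)) : bool :=
  match p with
  | [::] => false
  | a :: p' => [&& a == tsa_v1 A, path (tsa_edge A) a p' & last a p' == tsa_v2 A]
  end.

Definition balanced (p : seq (tsa_V A)) : bool :=
  run (map (tsa_rho A) p) == Some ([::], [::]).

Definition G (n : nat) : nat :=
  #|[pred t : n.-tuple (tsa_V A) | walk_v1_v2 t && balanced t]|.
End Paths.

(* Gamma1 runs a binary counter. The counter, least significant bit first, sits on
   the X-stack with that bit on top; a round pops it and pushes its successor on
   the Y-stack (propagating the carry), then moves the result back onto X. Whenever
   a popped bit is 1 the path may instead leave: it empties both stacks and reaches
   v2. Emptying costs three steps per X-letter and two per Y-letter while reading a
   bit costs two, so leaving right after the j-th bit of a b-bit counter produces a
   balanced path of length (start of the round) + 3b + 3 + j. Hence G(Gamma1, n)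
   <= 1, and the bits of the counter are written on consecutive positions of alpha,
   before the next round starts. Every word w occurs, since w 1 is the binary
   expansion of some number. *)

From HB Require Import structures.
From mathcomp Require Import all_boot all_order all_algebra.
From mathcomp Require Import zify.
Set Implicit Arguments. Unset Strict Implicit. Unset Printing Implicit Defensive.

Definition run_from (o : option (seq int * seq int)) (ls : seq label) :=
  foldl (fun os l => if os is Some s then step l s else None) o ls.

Lemma run_from_None ls : run_from None ls = None.
Proof. by elim: ls. Qed.

Lemma big_tuple_cons (T : finType) k (F : k.+1.-tuple T -> nat) :
  \sum_(t : k.+1.-tuple T) F t = \sum_(x : T) \sum_(t : k.-tuple T) F [tuple of x :: t].
Proof.
rewrite pair_big /=.
pose cons_pair (p : T * k.-tuple T) : k.+1.-tuple T := [tuple of p.1 :: p.2].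
rewrite (reindex cons_pair) /=; last first.
  exists (fun t => (thead t, behead_tuple t)) => [[x t]|t] _ /=.
    by congr pair; apply: val_inj.
  by case/tupleP: t => x t; apply: val_inj.
by apply: eq_bigr => -[x t].
Qed.

Section AcceptingContinuations.
Variables (T : finType) (rho : T -> label) (succs : T -> seq T) (final : T).
Hypothesis succs_uniq : forall v, uniq (succs v).

Fixpoint accepting (k : nat) (v : T) (s : seq int * seq int) : nat :=
  if k is k'.+1 then
    sumn [seq if step (rho u) s is Some s' then accepting k' u s' else 0 | u <- succs v]
  else (v == final) && (s == ([::], [::])).

Lemma card_accepting k v s :
  #|[pred t : k.-tuple T | [&& path (fun a b => b \in succs a) v t, last v t == final
       & run_from (Some s) (map rho t) == Some ([::], [::])]]| = accepting k v s.
Proof.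
elim: k v s => [|k IHk] v s.
  rewrite -sum1_card big_mkcond /= (big_pred1 [tuple]) => [|t]; last first.
    exact/esym/eqP/tuple0.
  by rewrite inE /= (inj_eq (@Some_inj _)).
rewrite -sum1_card big_mkcond /= big_tuple_cons sumnE big_map.
rewrite (big_uniq _ (succs_uniq v)) /= [RHS]big_mkcond /=.
apply: eq_bigr => u _; case: ifP => [vu | /negbT vNu]; last first.
  by rewrite big1 // => t _; rewrite inE /= (negbTE vNu).
under eq_bigr => t _ do rewrite inE /= vu /=.
case: (step (rho u) s) => [s'|]; last first.
  by rewrite big1 // => t _; rewrite run_from_None !andbF.
by rewrite -IHk -big_mkcond sum1_card.
Qed.
End AcceptingContinuations.

Section CountingBalancedPaths.
Variables (A : two_stack_automaton) (succs : tsa_V A -> seq (tsa_V A)).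
Hypothesis edge_succs : forall a b, tsa_edge A a b = (b \in succs a).
Hypothesis succs_uniq : forall v, uniq (succs v).

Lemma G0 : G A 0 = 0.
Proof. by apply: eq_card0 => t; rewrite inE [t]tuple0. Qed.

Lemma G_accepting n :
  G A n.+1 = accepting (tsa_rho A) succs (tsa_v2 A) n (tsa_v1 A) ([::], [::]).
Proof.
rewrite -card_accepting // /G -!sum1_card big_mkcond [RHS]big_mkcond /= big_tuple_cons.
rewrite (bigD1 (tsa_v1 A)) //= [X in _ + X]big1 ?addn0 => [|v v_ne1]; last first.
  by apply: big1 => t _; rewrite inE /= (negbTE v_ne1).
apply: eq_bigr => t _; rewrite !inE /walk_v1_v2 /balanced /= eqxx.
by rewrite (eq_path edge_succs) tsa_rho1 /run /= -andbA.
Qed.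
End CountingBalancedPaths.

Definition delay (d : nat) (f : nat -> nat) (k : nat) : nat :=
  if d <= k then f (k - d) else 0.

Lemma delay0 f k : delay 0 f k = f k.
Proof. by rewrite /delay subn0. Qed.

Lemma delaySS d f k : delay d.+1 f k.+1 = delay d f k.
Proof. by rewrite /delay ltnS subSS. Qed.

Lemma eq_delay d f g k : f =1 g -> delay d f k = delay d g k.
Proof. by rewrite /delay => ->. Qed.

Lemma delay_delay d e f k : delay d (delay e f) k = delay (d + e) f k.
Proof.
rewrite /delay subnDA; case: (leqP d k) => [le_dk | lt_kd]; first by rewrite leq_subRL.
by case: leqP => // le_dek; lia.
Qed.

Definition bit_at (bs : seq bool) (j : nat) : nat := nth false bs j.

Lemma delay_bit_at_cons d (b : bool) bs k :
  delay d (bit_at (b :: bs)) k = (b && (k == d)) + delay d.+1 (bit_at bs) k.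
Proof.
rewrite /delay /bit_at; case: (ltngtP d k) => [lt_dk | _ | ->].
- by rewrite andbF -(subnSK lt_dk).
- by rewrite andbF.
by rewrite subnn andbT addn0.
Qed.

Lemma delay_bit_at_le1 d bs k : delay d (bit_at bs) k <= 1.
Proof. by rewrite /delay; case: ifP => // _; apply: leq_b1. Qed.

Lemma delay_bit_at_nil d k : delay d (bit_at [::]) k = 0.
Proof. by rewrite /delay /bit_at nth_nil if_same. Qed.

Fixpoint inc (bs : seq bool) : seq bool :=
  match bs with
  | [::] => [:: true]
  | false :: bs' => true :: bs'
  | true :: bs' => false :: inc bs'
  end.

Lemma size_inc bs : size bs <= size (inc bs).
Proof. by elim: bs => [|[] bs IHbs]. Qed.

Lemma iter_inc_odd m : iter m.*2.+1 inc [::] = true :: iter m inc [::].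
Proof. by elim: m => // m IHm; rewrite doubleS 2!iterS IHm. Qed.

Lemma iter_inc_even m : iter m.+1.*2 inc [::] = false :: iter m.+1 inc [::].
Proof. by rewrite doubleS iterS iter_inc_odd. Qed.

Lemma iter_inc_onto bs : last true bs -> exists m, iter m inc [::] = bs.
Proof.
elim: bs => [|b bs IHbs]; first by exists 0.
case: bs IHbs => [_ | c bs IHbs] /=; first by case: b => // _; exists 1.
case/IHbs=> m iter_m; case: b.
  by exists m.*2.+1; rewrite iter_inc_odd iter_m.
by case: m iter_m => // m iter_m; exists m.+1.*2; rewrite iter_inc_even iter_m.
Qed.

(* Inc vertices act while the carry propagates, Copy vertices once it has stopped,
   Move vertices transfer Y back onto X, and Exit vertices empty the stacks. The
   digit in a name is the letter popped or pushed; letter 2 marks stack bottoms. *)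
Inductive vertex :=
  | Start | Final | PushXBottom | Round
  | IncPop0 | IncPop1 | IncPop2 | IncPush0 | IncPushNew
  | CopyPop0 | CopyPop1 | CopyPop2 | CopyPush0 | CopyPush1 | CopyDone
  | Move | MovePop0 | MovePop1 | MovePop2 | MovePush0 | MovePush1 | MoveDone
  | Exit | ExitPopX0 | ExitPopX1 | ExitPopX2 | ExitPadX1 | ExitPadX2
  | ExitSwitch | ExitPopY0 | ExitPopY1 | ExitPopY2 | ExitPadY.

Scheme Boolean Equality for vertex.

Definition vertices : seq vertex :=
  [:: Start; Final; PushXBottom; Round;
      IncPop0; IncPop1; IncPop2; IncPush0; IncPushNew;
      CopyPop0; CopyPop1; CopyPop2; CopyPush0; CopyPush1; CopyDone;
      Move; MovePop0; MovePop1; MovePop2; MovePush0; MovePush1; MoveDone;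
      Exit; ExitPopX0; ExitPopX1; ExitPopX2; ExitPadX1; ExitPadX2;
      ExitSwitch; ExitPopY0; ExitPopY1; ExitPopY2; ExitPadY].

Lemma vertex_findK : cancel (fun v => find (vertex_beq v) vertices) (nth Start vertices).
Proof. by case. Qed.
HB.instance Definition _ := Countable.copy vertex (can_type vertex_findK).

Lemma verticesP : Finite.axiom vertices.
Proof. by case. Qed.
HB.instance Definition _ := isFinite.Build vertex verticesP.

Definition label_of (v : vertex) : label :=
  match v with
  | Start | Final | CopyDone | MoveDone | Exit | ExitPadX1 | ExitPadX2
  | ExitSwitch | ExitPadY => Leps
  | PushXBottom | Move => LX 2 | Round => LY 2
  | IncPop0 | CopyPop0 | ExitPopX0 => LXinv 0
  | IncPop1 | CopyPop1 | ExitPopX1 => LXinv 1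
  | IncPop2 | CopyPop2 | ExitPopX2 => LXinv 2
  | IncPush0 | CopyPush0 => LY 0
  | IncPushNew | CopyPush1 => LY 1
  | MovePop0 | ExitPopY0 => LYinv 0
  | MovePop1 | ExitPopY1 => LYinv 1
  | MovePop2 | ExitPopY2 => LYinv 2
  | MovePush0 => LX 0 | MovePush1 => LX 1
  end.

Definition successors (v : vertex) : seq vertex :=
  let inc_pops := [:: IncPop0; IncPop1; IncPop2] in
  let copy_pops := [:: CopyPop0; CopyPop1; CopyPop2] in
  let move_pops := [:: MovePop0; MovePop1; MovePop2] in
  let exit_popsX := [:: ExitPopX0; ExitPopX1; ExitPopX2] in
  let exit_popsY := [:: ExitPopY0; ExitPopY1; ExitPopY2] in
  match v with
  | Start => [:: PushXBottom] | Final => [::] | PushXBottom => [:: Round]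
  | Round | IncPush0 => inc_pops
  | IncPop0 => [:: CopyPush1] | IncPop1 => [:: IncPush0; Exit]
  | IncPop2 => [:: IncPushNew] | IncPushNew => [:: Move]
  | CopyPush0 | CopyPush1 => copy_pops
  | CopyPop0 => [:: CopyPush0] | CopyPop1 => [:: CopyPush1; Exit]
  | CopyPop2 => [:: CopyDone] | CopyDone => [:: Move]
  | Move | MovePush0 | MovePush1 => move_pops
  | MovePop0 => [:: MovePush0] | MovePop1 => [:: MovePush1]
  | MovePop2 => [:: MoveDone] | MoveDone => [:: Round]
  | Exit | ExitPadX2 => exit_popsX
  | ExitPopX0 | ExitPopX1 => [:: ExitPadX1] | ExitPadX1 => [:: ExitPadX2]
  | ExitPopX2 => [:: ExitSwitch]
  | ExitSwitch | ExitPadY => exit_popsY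
  | ExitPopY0 | ExitPopY1 => [:: ExitPadY] | ExitPopY2 => [:: Final]
  end.

Definition edge : rel vertex := fun u v => v \in successors u.

Lemma edge_label_ok u v : edge u v -> ~~ lsim (label_of u) (label_of v).
Proof. by case: u; case: v. Qed.

Lemma successors_uniq v : uniq (successors v).
Proof. by case: v. Qed.

Definition Gamma1 : two_stack_automaton :=
  @TwoStackAutomaton vertex label_of edge Start Final erefl erefl erefl edge_label_ok.

Local Notation count := (accepting label_of successors Final).

Lemma G_Gamma1 n : G Gamma1 n.+1 = count n Start ([::], [::]).
Proof. exact: (@G_accepting Gamma1 successors (fun _ _ => erefl) successors_uniq). Qed.

Definition bit (b : bool) : int := Posz b.

HB.lock Definition stack (bs : seq bool) : seq int := Posz 2 :: map bit bs.

Lemma stack_nil : stack [::] = [:: Posz 2].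
Proof. by rewrite stack.unlock. Qed.

Lemma stack_rcons bs b : stack (rcons bs b) = rcons (stack bs) (bit b).
Proof. by rewrite stack.unlock map_rcons. Qed.

Lemma stack_rev_cons b bs : stack (rev (b :: bs)) = rcons (stack (rev bs)) (bit b).
Proof. by rewrite rev_cons stack_rcons. Qed.

Lemma pop_rcons i w a : pop i (rcons w a) = if a == i then Some w else None.
Proof. by case: w => [|c w] /=; rewrite ?last_rcons ?belast_rcons. Qed.
Arguments pop : simpl never.

Ltac solve_tests := repeat (case: eqP => ? /=); lia.

Ltac count_step k :=
  case: k => [|k]; rewrite /= ?pop_rcons /= ?add0n ?addn0 ?delaySS //;
  try solve_tests.

Lemma count_ExitPadY ys k : count k ExitPadY ([::], stack ys) = (k == 2 * size ys + 2).
Proof.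
elim/last_ind: ys k => [|ys b IHys] k.
  by rewrite stack_nil; count_step k; count_step k; count_step k.
rewrite stack_rcons size_rcons.
by count_step k; case: b => /=; count_step k; rewrite IHys; solve_tests.
Qed.

Lemma count_ExitSwitch k s : count k ExitSwitch s = count k ExitPadY s.
Proof. by case: k. Qed.

Lemma count_ExitPadX2 xs ys k :
  count k ExitPadX2 (stack xs, stack ys) = (k == 3 * size xs + 2 * size ys + 4).
Proof.
elim/last_ind: xs k => [|xs b IHxs] k.
  rewrite [stack [::]]stack_nil; count_step k; count_step k.
  by rewrite count_ExitSwitch count_ExitPadY; solve_tests.
rewrite stack_rcons size_rcons.
by count_step k; case: b => /=; count_step k; count_step k;
  rewrite IHxs; solve_tests.
Qed.

Lemma count_Exit k s : count k Exit s = count k ExitPadX2 s.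
Proof. by case: k. Qed.

Lemma count_CopyPush1 k s : count k CopyPush1 s = count k CopyPush0 s.
Proof. by case: k. Qed.

(* The first summand counts the exits taken during the phase, the second the paths
   that go on to the Move phase. *)
Lemma count_copy bs ys k :
  count k CopyPush0 (stack (rev bs), stack ys) =
  delay (3 * size bs + 2 * size ys + 3) (bit_at bs) k +
  delay (2 * size bs + 3) (fun j => count j Move (stack [::], stack (ys ++ bs))) k.
Proof.
elim: bs ys k => [|b bs IHbs] ys k.
  rewrite cats0 delay_bit_at_nil /= [stack [::]]stack_nil.
  by count_step k; count_step k; count_step k; rewrite delay0.
rewrite stack_rev_cons.
have -> : 3 * size (b :: bs) + 2 * size ys + 3 = (3 * size bs + 2 * size ys + 4).+2.
  by rewrite /=; lia.
have -> : 2 * size (b :: bs) + 3 = (2 * size bs + 3).+2 by rewrite /=; lia.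
have shift_ys : 3 * size bs + 2 * (size ys).+1 + 3 = (3 * size bs + 2 * size ys + 4).+1.
  by lia.
count_step k; case: b => /=; count_step k.
  rewrite -[1%R]/(bit true) -stack_rcons count_CopyPush1 IHbs count_Exit count_ExitPadX2.
  by rewrite delay_bit_at_cons size_rcons shift_ys cat_rcons size_rev addnC addnA.
rewrite -[(0%R : int)]/(bit false) -stack_rcons IHbs.
by rewrite delay_bit_at_cons size_rcons shift_ys cat_rcons.
Qed.

Lemma count_increment bs ys k :
  count k IncPush0 (stack (rev bs), stack ys) =
  delay (3 * size bs + 2 * size ys + 3) (bit_at bs) k +
  delay (2 * size bs + 3) (fun j => count j Move (stack [::], stack (ys ++ inc bs))) k.
Proof.
elim: bs ys k => [|b bs IHbs] ys k.
  rewrite delay_bit_at_nil /= [stack [::]]stack_nil.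
  count_step k; count_step k; count_step k.
  by rewrite delay0 -[1%R]/(bit true) -stack_rcons cats1.
rewrite stack_rev_cons.
have -> : 3 * size (b :: bs) + 2 * size ys + 3 = (3 * size bs + 2 * size ys + 4).+2.
  by rewrite /=; lia.
have -> : 2 * size (b :: bs) + 3 = (2 * size bs + 3).+2 by rewrite /=; lia.
have shift_ys : 3 * size bs + 2 * (size ys).+1 + 3 = (3 * size bs + 2 * size ys + 4).+1.
  by lia.
count_step k; case: b => /=; count_step k.
  rewrite -[(0%R : int)]/(bit false) -stack_rcons IHbs count_Exit count_ExitPadX2.
  by rewrite delay_bit_at_cons size_rcons shift_ys cat_rcons size_rev addnC addnA.
rewrite -[1%R]/(bit true) -stack_rcons count_CopyPush1 count_copy.
by rewrite delay_bit_at_cons size_rcons shift_ys cat_rcons.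
Qed.

Lemma count_MovePush0 k s : count k MovePush0 s = count k Move s.
Proof. by case: k. Qed.

Lemma count_MovePush1 k s : count k MovePush1 s = count k Move s.
Proof. by case: k. Qed.

Lemma count_move xs zs k :
  count k Move (stack xs, stack zs) =
  delay (2 * size zs + 3) (fun j => count j Round (stack (xs ++ rev zs), stack [::])) k.
Proof.
elim/last_ind: zs xs k => [|zs b IHzs] xs k.
  rewrite cats0 [stack [::]]stack_nil.
  by count_step k; count_step k; count_step k; rewrite delay0 -stack_nil.
rewrite stack_rcons size_rcons rev_rcons.
have -> : 2 * (size zs).+1 + 3 = (2 * size zs + 3).+2 by lia.
count_step k; case: b => /=; count_step k.
  by rewrite -[1%R]/(bit true) -stack_rcons count_MovePush1 IHzs cat_rcons.
by rewrite -[(0%R : int)]/(bit false) -stack_rcons count_MovePush0 IHzs cat_rcons.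
Qed.

Definition counter (bs : seq bool) : seq int * seq int := (stack (rev bs), stack [::]).

Definition round_length (bs : seq bool) : nat := 2 * size bs + 2 * size (inc bs) + 6.

Lemma count_Round k s : count k Round s = count k IncPush0 s.
Proof. by case: k. Qed.

Lemma count_round bs k :
  count k Round (counter bs) =
  delay (3 * size bs + 3) (bit_at bs) k +
  delay (round_length bs) (fun j => count j Round (counter (inc bs))) k.
Proof.
rewrite count_Round count_increment /= muln0 addn0.
rewrite (@eq_delay (2 * size bs + 3) _
           (delay (2 * size (inc bs) + 3) (fun j => count j Round (counter (inc bs))))).
  by rewrite delay_delay /round_length; congr (_ + delay _ _ _); lia.
by move=> j; rewrite count_move.
Qed.

Lemma count_round_early bs k :
  k < round_length bs -> count k Round (counter bs) = delay (3 * size bs + 3) (bit_at bs) k.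
Proof. by move=> lt_k; rewrite count_round {2}/delay leqNgt lt_k addn0. Qed.

Lemma count_round_late bs k :
  round_length bs <= k ->
  count k Round (counter bs) = count (k - round_length bs) Round (counter (inc bs)).
Proof.
move=> le_k; rewrite count_round {2}/delay le_k /delay /bit_at.
case: leqP => // _; rewrite nth_default //.
by move: le_k; rewrite /round_length; have := size_inc bs; lia.
Qed.

Lemma count_Round_le1 k bs : count k Round (counter bs) <= 1.
Proof.
elim/ltn_ind: k bs => k IHk bs.
case: (ltnP k (round_length bs)) => [lt_k | le_k].
  by rewrite count_round_early // delay_bit_at_le1.
by rewrite count_round_late //; apply: IHk; rewrite /round_length in le_k *; lia.
Qed.

Lemma count_Start k : count k.+2 Start ([::], [::]) = count k Round (counter [::]).
Proof. by rewrite /counter /= stack_nil !addn0. Qed.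

Lemma count_Round_after_rounds m k :
  count (\sum_(i < m) round_length (iter i inc [::]) + k) Round (counter [::]) =
  count k Round (counter (iter m inc [::])).
Proof.
elim: m k => [|m IHm] k; first by rewrite big_ord0.
by rewrite big_ord_recr /= -addnA IHm count_round_late ?leq_addr // addKn.
Qed.

Lemma G_Gamma1_le1 n : G Gamma1 n <= 1.
Proof.
case: n => [|[|[|n]]]; rewrite ?G0 ?G_Gamma1 //.
by rewrite count_Start count_Round_le1.
Qed.

Theorem lemma2p3 :
  exists A : two_stack_automaton,
    (forall n : nat, G A n = 0 \/ G A n = 1) /\
    (forall w : seq bool, exists k : nat,
        forall i : nat, i < size w -> G A (k + i).+1 = nat_of_bool (nth false w i)).
Proof.
exists Gamma1; split.
  by move=> n; case: (G Gamma1 n) (G_Gamma1_le1 n) => [|[|]]; auto.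
move=> w; set bs := rcons w true.
have [m iter_m] : exists m, iter m inc [::] = bs by apply: iter_inc_onto; rewrite last_rcons.
set offset := \sum_(i < m) round_length (iter i inc [::]).
exists (offset + (3 * size bs + 3)).+2 => i lt_iw.
rewrite G_Gamma1 !addSn count_Start -addnA count_Round_after_rounds iter_m.
rewrite count_round_early; last first.
  by rewrite /round_length; have := size_inc bs; rewrite size_rcons; lia.
by rewrite /delay leq_addr addKn /bit_at nth_rcons lt_iw.
Qed.
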